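(* For every integer $n\ge 3$, $$d_3(n)=\begin{cases} n+\tfrac13 n & \text{if } n\equiv 0 \pmod 6,\\ n-\tfrac16 (n-1) & \text{if } n\equiv 1 \pmod 6,\\ n+\tfrac13 (n-2) & \text{if } n\equiv 2 \pmod 6,\\ n-\tfrac13 n & \text{if } n\equiv 3 \pmod 6,\\ n+\tfrac13 (n+2) & \text{if } n\equiv 4 \pmod 6,\\ n-\tfrac16 (n+1) & \text{if } n\equiv 5 \pmod 6.\end{cases}$$
   Context: A Mondrian partition of an $n\times n$ square ($n$ a positive integer) is a dissection of the square into $k\ge 2$ non-overlapping rectangles with positive integer side lengths which are pairwise non-congruent (rectangles of dimensions $a\times b$ and $b\times a$ count as congruent). Its defect is the difference between the largest and the smallest area among its rectangles. For $k\ge 2$, $d_k(n)$ denotes the minimum defect over all Mondrian partitions of the $n\times n$ square using exactly $k$ rectangles. *)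

From mathcomp Require Import all_boot.
Set Implicit Arguments. Unset Strict Implicit. Unset Printing Implicit Defensive.

(* A rectangle placed in the n x n square with integer corner coordinates:
   (x, y, w, h) occupies [x, x+w] x [y, y+h]. *)
Definition rect := (nat * nat * nat * nat)%type.
Definition rx (r : rect) : nat := r.1.1.1.
Definition ry (r : rect) : nat := r.1.1.2.
Definition rw (r : rect) : nat := r.1.2.
Definition rh (r : rect) : nat := r.2.

Definition area (r : rect) : nat := rw r * rh r.

Definition rect_in (n : nat) (r : rect) : bool :=
  [&& 0 < rw r, 0 < rh r, rx r + rw r <= n & ry r + rh r <= n].

(* the unit cell [i,i+1] x [j,j+1] lies in r *)
Definition covers (r : rect) (i j : nat) : bool :=
  [&& rx r <= i, i < rx r + rw r, ry r <= j & j < ry r + rh r].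

Definition congruent (r s : rect) : bool :=
  ((rw r == rw s) && (rh r == rh s)) || ((rw r == rh s) && (rh r == rw s)).

(* Mondrian partition of the n x n square into exactly k rectangles (k >= 2):
   rectangles inside the square, every unit cell covered exactly once
   (i.e. non-overlapping and covering the square), pairwise non-congruent. *)
Definition mondrian (n k : nat) (s : seq rect) : Prop :=
  [/\ 2 <= k, size s = k, all (rect_in n) s,
      (forall i j, i < n -> j < n -> count (fun r => covers r i j) s = 1)
    & pairwise (fun r t => ~~ congruent r t) s].

Definition max_area (s : seq rect) : nat := \max_(r <- s) area r.
Definition min_area (s : seq rect) : nat := \big[minn/max_area s]_(r <- s) area r.
Definition defect (s : seq rect) : nat := max_area s - min_area s.

Definition is_dk (k n m : nat) : Prop :=
  (exists s, mondrian n k s /\ defect s = m) /\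
  (forall s, mondrian n k s -> m <= defect s).

(* the claimed value of d_3(n) (all divisions are exact in each case) *)
Definition d3_formula (n : nat) : nat :=
  match n %% 6 with
  | 0 => n + n %/ 3
  | 1 => n - (n - 1) %/ 6
  | 2 => n + (n - 2) %/ 3
  | 3 => n - n %/ 3
  | 4 => n + (n + 2) %/ 3
  | _ => n - (n + 1) %/ 6
  end.

From mathcomp Require Import all_boot zify.

(* Upper bound: cut a bottom strip [0,n]x[0,a] off the square and split the
   rest into two side-by-side rectangles of widths w and n - w; for a ~ n/3
   and w ~ n/2 (chosen according to n mod 6) this "stacked" partition has
   defect exactly d3_formula n.

   Lower bound: among the four corner cells of the square, two are covered by
   the same piece; such a piece spans a whole side of the square.  Using the
   symmetries of the square (transposition, reflection in the horizontal
   midline) and of the labelling of the pieces, it is the bottom strip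
   [0,n]x[0,a].  The other two pieces then tile [0,n]x[a,n] either as two horizontal strips, giving three
   strips of distinct heights and defect >= 2n, or as two side-by-side pieces
   of widths w <> c with w + c = n, whose defect is bounded by an elementary
   inequality proved separately for each residue of n modulo 6. *)

Definition spread (x y z : nat) : nat := maxn x (maxn y z) - minn x (minn y z).

Lemma spreadC12 x y z : spread x y z = spread y x z.
Proof. rewrite /spread; lia. Qed.

Lemma spreadC23 x y z : spread x y z = spread x z y.
Proof. rewrite /spread; lia. Qed.

Lemma d3_formula_cases n : exists k,
  (n = 6*k /\ d3_formula n = 8*k) \/ (n = 6*k+1 /\ d3_formula n = 5*k+1) \/
  (n = 6*k+2 /\ d3_formula n = 8*k+2) \/ (n = 6*k+3 /\ d3_formula n = 4*k+2) \/
  (n = 6*k+4 /\ d3_formula n = 8*k+6) \/ (n = 6*k+5 /\ d3_formula n = 5*k+4).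
Proof.
exists (n %/ 6); rewrite /d3_formula.
have := divn_eq n 6; have : n %% 6 < 6 by rewrite ltn_pmod.
by case: (n %% 6) => [|[|[|[|[|[|r]]]]]]; lia.
Qed.

Lemma d3_formula_le_double n : d3_formula n <= 2 * n.
Proof. by have [k] := d3_formula_cases n; lia. Qed.

(* Three full-width strips of pairwise distinct heights have defect at least 2n,
   which already exceeds the formula. *)
Lemma strips_spread n a p q : a <> p -> a <> q -> p <> q ->
  2 * n <= spread (n * a) (n * p) (n * q).
Proof.
move=> ap aq pq; rewrite /spread -!maxnMr -!minnMr -mulnBr mulnC.
by apply: leq_mul => //; lia.
Qed.

Definition gap (f X Y Z : nat) : Prop := [\/ f + Y <= X, f + Y <= Z | f + X <= Z].

Lemma spread_ge_gap f X Y Z : Y <= Z -> gap f X Y Z -> f <= spread X Y Z.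
Proof. by rewrite /spread => ? []; lia. Qed.

Lemma gap_columns t f X w c m : w + t <= c -> f <= t * m -> gap f X (w * m) (c * m).
Proof. move=> wtc ftm; apply: Or32; have := leq_mul wtc (leqnn m); nia. Qed.

Lemma gap_bottom W f n a w c m : w <= W -> f + W * m <= n * a ->
  gap f (n * a) (w * m) (c * m).
Proof. move=> wW fWa; apply: Or31; have := leq_mul wW (leqnn m); nia. Qed.

Lemma gap_wide_column f X Y c m : f + X <= c * m -> gap f X Y (c * m).
Proof. by move=> ?; apply: Or33. Qed.

(* The inequality for each residue of n mod 6: split on whether the bottom strip
   is thinner or thicker than about n/3 (and, for odd residues, on whether the
   columns are as balanced as possible). *)
Lemma gap_mod0 k a m w c : 0 < k -> a + m = 6*k -> w < c -> w + c = 6*k ->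
  gap (8*k) (6*k * a) (w * m) (c * m).
Proof.
move=> *; have [small|large] : a <= 2*k \/ 2*k+1 <= a by lia.
- apply: (gap_columns 2); nia.
- apply: (gap_bottom (3*k-1)); first lia.
  have -> : a = 2*k+1 + (a - (2*k+1)) by lia. nia.
Qed.

Lemma gap_mod1 k a m w c : 0 < k -> a + m = 6*k+1 -> w < c -> w + c = 6*k+1 ->
  gap (5*k+1) ((6*k+1) * a) (w * m) (c * m).
Proof.
move=> *; have [half|short] : w = 3*k \/ w <= 3*k-1 by lia.
- have hc : c = 3*k+1 by lia. subst w c.
  have [small|large] : a <= 2*k \/ 2*k+1 <= a by lia.
  + apply: gap_wide_column; have := leq_mul small (leqnn (9*k+2)); nia.
  + apply: (gap_bottom (3*k)) => //; nia.
- have [tall|low] : 5*k+1 <= 3*m \/ 3*m <= 5*k by lia.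
  + apply: (gap_columns 3); lia.
  + apply: (gap_bottom (3*k-1)) => //; nia.
Qed.

Lemma gap_mod2 k a m w c : a + m = 6*k+2 -> w < c -> w + c = 6*k+2 ->
  gap (8*k+2) ((6*k+2) * a) (w * m) (c * m).
Proof.
move=> *; have [small|large] : a <= 2*k+1 \/ 2*k+2 <= a by lia.
- apply: (gap_columns 2); nia.
- apply: (gap_bottom (3*k)); [lia | nia].
Qed.

Lemma gap_mod3 k a m w c : a + m = 6*k+3 -> w < c -> w + c = 6*k+3 ->
  gap (4*k+2) ((6*k+3) * a) (w * m) (c * m).
Proof.
move=> *; have [small|large] : a <= 2*k+1 \/ 2*k+2 <= a by lia.
- apply: (gap_columns 1); nia.
- apply: (gap_bottom (3*k+1)); [lia | nia].
Qed.

Lemma gap_mod4 k a m w c : a + m = 6*k+4 -> w < c -> w + c = 6*k+4 ->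
  gap (8*k+6) ((6*k+4) * a) (w * m) (c * m).
Proof.
move=> *; have [small|large] : a <= 2*k+1 \/ 2*k+2 <= a by lia.
- apply: (gap_columns 2); nia.
- apply: (gap_bottom (3*k+1)); [lia | nia].
Qed.

Lemma gap_mod5 k a m w c : a + m = 6*k+5 -> w < c -> w + c = 6*k+5 ->
  gap (5*k+4) ((6*k+5) * a) (w * m) (c * m).
Proof.
move=> *; have [half|short] : w = 3*k+2 \/ w <= 3*k+1 by lia.
- have hc : c = 3*k+3 by lia. subst w c.
  have [small|large] : a <= 2*k+1 \/ 2*k+2 <= a by lia.
  + apply: gap_wide_column; nia.
  + apply: (gap_bottom (3*k+2)) => //; nia.
- have [tall|low] : 5*k+4 <= 3*m \/ 3*m <= 5*k+3 by lia.
  + apply: (gap_columns 3); lia.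
  + apply: (gap_bottom (3*k+1)) => //; nia.
Qed.

Lemma columns_spread_lt n a m w c : 3 <= n -> a + m = n -> w < c -> w + c = n ->
  d3_formula n <= spread (n * a) (w * m) (c * m).
Proof.
move=> n3 am wc wcn; apply: spread_ge_gap; first exact: leq_mul (ltnW wc) (leqnn m).
have [k [[en ->]|[[en ->]|[[en ->]|[[en ->]|[[en ->]|[en ->]]]]]]] := d3_formula_cases n;
  rewrite {}en in n3 am wcn *.
- by apply: gap_mod0 => //; lia.
- by apply: gap_mod1 => //; lia.
- exact: gap_mod2.
- exact: gap_mod3.
- exact: gap_mod4.
- exact: gap_mod5.
Qed.

Lemma columns_spread n a m w c : 3 <= n -> a + m = n -> w <> c -> w + c = n ->
  d3_formula n <= spread (n * a) (w * m) (c * m).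
Proof.
move=> n3 am wc wcn; have [lt|gt] : w < c \/ c < w by lia.
- exact: columns_spread_lt.
- by rewrite spreadC23; apply: columns_spread_lt => //; lia.
Qed.

Definition tiling3 (n : nat) (r1 r2 r3 : rect) : Prop :=
  [/\ rect_in n r1, rect_in n r2, rect_in n r3,
      forall i j, i < n -> j < n -> covers r1 i j + covers r2 i j + covers r3 i j = 1
    & [&& ~~ congruent r1 r2, ~~ congruent r1 r3 & ~~ congruent r2 r3]].

Lemma congruent_sym r s : congruent r s = congruent s r.
Proof. by rewrite /congruent; apply/idP/idP; lia. Qed.

Lemma tiling3_swap12 {n r1 r2 r3} : tiling3 n r1 r2 r3 -> tiling3 n r2 r1 r3.
Proof.
case=> i1 i2 i3 cov /and3P [c12 c13 c23]; split=> // [i j hi hj|].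
- by rewrite (addnC (covers r2 i j)); apply: cov.
- by rewrite congruent_sym c12 c13 c23.
Qed.

Lemma tiling3_swap23 {n r1 r2 r3} : tiling3 n r1 r2 r3 -> tiling3 n r1 r3 r2.
Proof.
case=> i1 i2 i3 cov /and3P [c12 c13 c23]; split=> // [i j hi hj|].
- by rewrite addnAC; apply: cov.
- by rewrite (congruent_sym r3) c12 c13 c23.
Qed.

Definition transpose (r : rect) : rect := (ry r, rx r, rh r, rw r).
Definition flip (n : nat) (r : rect) : rect := (rx r, n - ry r - rh r, rw r, rh r).

Lemma covers_transpose r i j : covers (transpose r) i j = covers r j i.
Proof. by rewrite /covers /=; apply/and4P/and4P => -[? ? ? ?]. Qed.

Lemma covers_flip n r i j : rect_in n r -> j < n ->
  covers (flip n r) i j = covers r i (n - 1 - j).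
Proof.
case: r => [[[x y] w] h]; rewrite /rect_in /covers /flip /rx /ry /rw /rh /=.
move=> /and4P [? ? ? ?] ?.
by apply/and4P/and4P => -[? ? ? ?]; split; lia.
Qed.

Lemma area_transpose r : area (transpose r) = area r.
Proof. exact: mulnC. Qed.

Lemma area_flip n r : area (flip n r) = area r.
Proof. by []. Qed.

Lemma tiling3_transpose {n r1 r2 r3} : tiling3 n r1 r2 r3 ->
  tiling3 n (transpose r1) (transpose r2) (transpose r3).
Proof.
have in_tr r : rect_in n r -> rect_in n (transpose r).
  by rewrite /rect_in /transpose /rx /ry /rw /rh /=; lia.
have cong_tr r s : congruent (transpose r) (transpose s) = congruent r s.
  by rewrite /congruent /transpose /rw /rh /=; apply/idP/idP; lia.
case=> i1 i2 i3 cov nc; split; rewrite ?cong_tr; try exact: in_tr; last by [].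
by move=> i j hi hj; rewrite !covers_transpose; apply: cov.
Qed.

Lemma tiling3_flip {n r1 r2 r3} : tiling3 n r1 r2 r3 ->
  tiling3 n (flip n r1) (flip n r2) (flip n r3).
Proof.
have in_fl r : rect_in n r -> rect_in n (flip n r).
  by rewrite /rect_in /flip /rx /ry /rw /rh /=; lia.
case=> i1 i2 i3 cov nc; split; try exact: in_fl; last by [].
by move=> i j hi hj; rewrite !covers_flip //; apply: cov; lia.
Qed.

Definition corners (n : nat) : seq (nat * nat) :=
  [:: (0, 0); (n - 1, 0); (0, n - 1); (n - 1, n - 1)].

Definition corner_count (n : nat) (r : rect) : nat := \sum_(p <- corners n) covers r p.1 p.2.

Definition side_strip (n : nat) (r : rect) : bool :=
  [|| covers r 0 0 && covers r (n - 1) 0, covers r 0 (n - 1) && covers r (n - 1) (n - 1),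
      covers r 0 0 && covers r 0 (n - 1) | covers r (n - 1) 0 && covers r (n - 1) (n - 1)].

Lemma covers_mix r i j i' j' : covers r i j -> covers r i' j' -> covers r i j'.
Proof. by rewrite /covers; lia. Qed.

(* Two corners in one rectangle: if they are opposite, the rectangle contains
   all four corners, so it spans a side in every case. *)
Lemma side_strip_of_corners n r : 2 <= corner_count n r -> side_strip n r.
Proof.
rewrite /corner_count /side_strip !big_cons big_nil /=.
have mix := @covers_mix r.
case c00: (covers r 0 0); case c10: (covers r (n - 1) 0);
  case c01: (covers r 0 (n - 1)); case c11: (covers r (n - 1) (n - 1)) => //=.
- by move: (mix _ _ _ _ c00 c11); rewrite c01.
- by move: (mix _ _ _ _ c10 c01); rewrite c11.
Qed.

(* Pigeonhole: four corners, each in exactly one of three pieces. *)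
Lemma tiling3_side_strip {n r1 r2 r3} : 0 < n -> tiling3 n r1 r2 r3 ->
  [|| side_strip n r1, side_strip n r2 | side_strip n r3].
Proof.
move=> n0 [_ _ _ cov _].
have count4 : corner_count n r1 + corner_count n r2 + corner_count n r3 = 4.
  rewrite /corner_count -!big_split /=; transitivity (\sum_(p <- corners n) 1).
    by apply: eq_big_seq => p; rewrite !inE => /or4P [] /eqP -> /=; apply: cov; lia.
  by rewrite sum1_size.
have [h|[h|h]] : 2 <= corner_count n r1 \/ 2 <= corner_count n r2 \/ 2 <= corner_count n r3
  by lia.
all: by rewrite (side_strip_of_corners _ _ h) ?orbT.
Qed.

(* Then either the other
   two pieces are horizontal strips, or they are two columns of height n - a. *)
Lemma above_strip_lb {n a r2 r3} : 3 <= n -> tiling3 n (0, 0, n, a) r2 r3 -> covers r2 0 a ->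
  d3_formula n <= spread (n * a) (area r2) (area r3).
Proof.
case: r2 => [[[x2 y2] w2] h2]; case: r3 => [[[x3 y3] w3] h3].
rewrite /tiling3 /rect_in /covers /area /rx /ry /rw /rh /=.
move=> n3 [_ /and4P [w2p h2p x2n y2n] /and4P [w3p h3p x3n y3n] cov /and3P [nc12 nc13 nc23]].
move=> /and4P [x2le _ y2le ay2].
have x20 : x2 = 0 by lia.
subst x2.
have y2a : y2 = a by have := cov 0 y2; lia.
subst y2.
have ay3 : a <= y3 by have := cov x3 y3; lia.
have [x3w3 y3h3] : x3 + w3 = n /\ y3 + h3 = n.
  by have := cov (n - 1) (n - 1); have := cov x3 y3; lia.
have [[w2n top]|[w2n top]] : w2 = n /\ a + h2 < n \/ w2 < n /\ a + h2 = n.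
  have [w2n|w2n] : w2 = n \/ w2 < n by lia.
    by left; split => //; have := cov x3 y3; lia.
  right; split => //; apply/eqP; apply: contraT => short.
  have y3a : y3 = a by have := cov (n - 1) a; lia.
  have x30 : x3 = 0 by have := cov 0 (n - 1); lia.
  by have := cov 0 a; lia.
- have [x30 y3e] : x3 = 0 /\ y3 = a + h2 by have := cov 0 (a + h2); have := cov x3 y3; lia.
  subst x3 y3 w2; have -> : w3 = n by lia.
  apply: leq_trans (d3_formula_le_double n) _; apply: strips_spread;
    [move: nc12 | move: nc13 | move: nc23]; rewrite /congruent /rw /rh /=; lia.
- have [x3e y3e] : x3 = w2 /\ y3 = a by have := cov w2 a; have := cov x3 y3; lia.
  subst x3 y3; have -> : h3 = h2 by lia.
  apply: columns_spread => //.
  move: nc23; rewrite /congruent /rw /rh /=; lia.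
Qed.

Lemma covers_corner {n r} : rect_in n r -> covers r (rx r) (ry r).
Proof. by rewrite /rect_in /covers; lia. Qed.

(* A piece spanning the bottom side is a bottom strip; one of the other two
   pieces contains the cell just above it. *)
Lemma bottom_strip_lb {n r1 r2 r3} : 3 <= n -> tiling3 n r1 r2 r3 ->
  covers r1 0 0 -> covers r1 (n - 1) 0 -> d3_formula n <= spread (area r1) (area r2) (area r3).
Proof.
case: r1 => [[[x y] w] a] n3 t; have [in1 in2 _ cov _] := t.
move: in1; rewrite /rect_in /covers /rx /ry /rw /rh /= => in1 c00 c10.
have [x0 [y0 wn]] : x = 0 /\ y = 0 /\ w = n by lia.
subst x y w.
have an : a < n.
  have [x2n y2n] : rx r2 < n /\ ry r2 < n by move: in2; rewrite /rect_in; lia.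
  have := cov _ _ x2n y2n; rewrite (covers_corner in2).
  by move: x2n y2n; rewrite /covers /rx /ry /rw /rh /=; lia.
have [c2|c3] : covers r2 0 a \/ covers r3 0 a.
  by have := cov 0 a (ltn_trans _ n3) an; rewrite /covers /rx /ry /rw /rh /=; lia.
- exact: above_strip_lb n3 t c2.
- by rewrite spreadC23; apply: above_strip_lb n3 (tiling3_swap23 t) c3.
Qed.

(* The remaining sides are reduced to the bottom one by the symmetries. *)
Lemma top_strip_lb {n r1 r2 r3} : 3 <= n -> tiling3 n r1 r2 r3 ->
  covers r1 0 (n - 1) -> covers r1 (n - 1) (n - 1) ->
  d3_formula n <= spread (area r1) (area r2) (area r3).
Proof.
move=> n3 t c01 c11; have [in1 _ _ _ _] := t; have n0 : 0 < n by lia.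
rewrite -(area_flip n r1) -(area_flip n r2) -(area_flip n r3).
by apply: bottom_strip_lb n3 (tiling3_flip t) _ _; rewrite covers_flip // subn0.
Qed.

Lemma side_strip_lb {n r1 r2 r3} : 3 <= n -> tiling3 n r1 r2 r3 -> side_strip n r1 ->
  d3_formula n <= spread (area r1) (area r2) (area r3).
Proof.
move=> n3 t /or4P [] /andP [c c'].
- exact: bottom_strip_lb n3 t c c'.
- exact: top_strip_lb n3 t c c'.
- rewrite -(area_transpose r1) -(area_transpose r2) -(area_transpose r3).
  by apply: bottom_strip_lb n3 (tiling3_transpose t) _ _; rewrite covers_transpose.
- rewrite -(area_transpose r1) -(area_transpose r2) -(area_transpose r3).
  by apply: top_strip_lb n3 (tiling3_transpose t) _ _; rewrite covers_transpose.
Qed.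

Lemma tiling3_lb {n r1 r2 r3} : 3 <= n -> tiling3 n r1 r2 r3 ->
  d3_formula n <= spread (area r1) (area r2) (area r3).
Proof.
move=> n3 t; have n0 : 0 < n by lia.
move: (tiling3_side_strip n0 t) => /or3P [strip|strip|strip].
- exact: side_strip_lb n3 t strip.
- by rewrite spreadC12; apply: side_strip_lb n3 (tiling3_swap12 t) strip.
- rewrite spreadC23 spreadC12.
  exact: side_strip_lb n3 (tiling3_swap12 (tiling3_swap23 t)) strip.
Qed.

Lemma defect3 r1 r2 r3 : defect [:: r1; r2; r3] = spread (area r1) (area r2) (area r3).
Proof. by rewrite /defect /min_area /max_area !big_cons !big_nil /spread; lia. Qed.

Lemma mondrian3_tiling3 {n r1 r2 r3} : mondrian n 3 [:: r1; r2; r3] -> tiling3 n r1 r2 r3.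
Proof.
case=> _ _ in123 cov nc123; move: in123 nc123 => /=; rewrite !andbT.
move=> /and3P [in1 in2 in3] /andP [/andP [c12 c13] c23].
split=> // [i j hi hj|]; last by rewrite c12 c13 c23.
by have := cov i j hi hj; rewrite /= addn0 addnA.
Qed.

Lemma mondrian3_lb n s : 3 <= n -> mondrian n 3 s -> d3_formula n <= defect s.
Proof.
move=> n3 ms; have [_ size3 _ _ _] := ms.
case: s size3 ms => [|r1 [|r2 [|r3 [|? ?]]]] // _ ms.
by rewrite defect3; apply: tiling3_lb n3 (mondrian3_tiling3 ms).
Qed.

(* The extremal partition: a bottom strip of height a below two columns of
   widths w and n - w. *)
Definition stacked (n a w : nat) : seq rect :=
  [:: (0, 0, n, a); (0, a, w, n - a); (w, a, n - w, n - a)].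

(* The two columns are non-congruent as soon as their widths differ. *)
Lemma stacked_mondrian n a w : 0 < a < n -> 0 < w < n -> w + w != n ->
  mondrian n 3 (stacked n a w).
Proof.
move=> an wn ww; split=> //.
- by rewrite /= /rect_in /rx /ry /rw /rh /=; lia.
- by move=> i j hi hj; rewrite /= /covers /rx /ry /rw /rh /=; lia.
- by rewrite /= /congruent /rx /ry /rw /rh /=; lia.
Qed.

Lemma stacked_defect n a m w c : a + m = n -> w + c = n ->
  defect (stacked n a w) = spread (n * a) (w * m) (c * m).
Proof.
move=> am wc; rewrite defect3 /area /rw /rh /=.
have -> : n - a = m by lia.
by have -> : n - w = c by lia.
Qed.

Lemma d3_attained n : 3 <= n -> exists s, mondrian n 3 s /\ defect s = d3_formula n.
Proof.
move=> n3; have [k [[en ->]|[[en ->]|[[en ->]|[[en ->]|[[en ->]|[en ->]]]]]]] := d3_formula_cases n;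
  rewrite {}en in n3 *.
- exists (stacked (6*k) (2*k) (3*k-1)); split; first by apply: stacked_mondrian; lia.
  by rewrite (stacked_defect _ _ (4*k) _ (3*k+1)) /spread; nia.
- exists (stacked (6*k+1) (2*k) (3*k)); split; first by apply: stacked_mondrian; lia.
  by rewrite (stacked_defect _ _ (4*k+1) _ (3*k+1)) /spread; nia.
- exists (stacked (6*k+2) (2*k+1) (3*k)); split; first by apply: stacked_mondrian; lia.
  by rewrite (stacked_defect _ _ (4*k+1) _ (3*k+2)) /spread; nia.
- exists (stacked (6*k+3) (2*k+1) (3*k+1)); split; first by apply: stacked_mondrian; lia.
  by rewrite (stacked_defect _ _ (4*k+2) _ (3*k+2)) /spread; nia.
- exists (stacked (6*k+4) (2*k+1) (3*k+1)); split; first by apply: stacked_mondrian; lia.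
  by rewrite (stacked_defect _ _ (4*k+3) _ (3*k+3)) /spread; nia.
- exists (stacked (6*k+5) (2*k+2) (3*k+2)); split; first by apply: stacked_mondrian; lia.
  by rewrite (stacked_defect _ _ (4*k+3) _ (3*k+3)) /spread; nia.
Qed.

Theorem mainTheorem2 (n : nat) : 3 <= n -> is_dk 3 n (d3_formula n).
Proof. by move=> n3; split=> [|s]; [exact: d3_attained | exact: mondrian3_lb]. Qed.
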